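(* For every $M>0$ there is a min-CICS instance $\mathbbm{I}=(\mathcal{F},\mathbb{M})$ with two MDPs $\mathbb{M}=(\mathcal{M}_1,\mathcal{M}_2)$ and the constraint $\mathcal{F}=\{\{1\},\{2\},\{1,2\}\}$ such that $\mathrm{ComGap}(\mathbbm{I})\ge M$; that is, the commitment gap of min-CICS is unbounded even for this single-selection constraint.
   Context: min-CICS: an instance $\mathbbm{I}=(\mathcal{F},\mathbb{M})$ consists of an upwards-closed family $\mathcal{F}\subseteq 2^{[n]}$ and $n$ acyclic Markov decision processes $\mathcal{M}_i$, each with a finite state set, root $\sigma_i$, actions $A_i(s)$ with nonnegative costs $c_i(a)$ and transition distributions $\Pi_i(s,a)$, and sink (terminal) states with nonnegative (possibly $+\infty$) values $v_i(t)$. A policy starts with all MDPs at their roots and repeatedly (adaptively) either advances some MDP in a non-terminal state by an action (paying its cost, random transition), or halts by selecting $S\in\mathcal{F}$ among MDPs currently in terminal states, paying $\sum_{i\in S}v_i(s_i)$. Its disutility is the expected total of action costs plus paid values; $\mathrm{OPT}(\mathbbm{I})$ is the minimum disutility over policies. A commitment $(\pi_1,\dots,\pi_n)$ assigns each state $s$ of $\mathcal{M}_i$ a distribution $\pi_i(s)$ over $A_i(s)$; a committing policy draws its action from $\pi_i(s)$ whenever it advances $\mathcal{M}_i$ at state $s$ (other choices may be adaptive). For min-CICS, $\mathrm{ComGap}(\mathbbm{I})=\inf\{\text{disutility of }\mathcal{T}:\mathcal{T}\text{ committing}\}/\mathrm{OPT}(\mathbbm{I})$. *)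

From HB Require Import structures.
From mathcomp Require Import all_boot all_order all_algebra.
From mathcomp Require Import boolp classical_sets reals constructive_ereal ereal.
Set Implicit Arguments. Unset Strict Implicit. Unset Printing Implicit Defensive.
Import Order.TTheory GRing.Theory Num.Theory.
Local Open Scope ring_scope.
Local Open Scope classical_set_scope.

(*   m_act    : finite pool of action names; A(s) = [pred a | m_avail s a]   *)
Record MDP (R : realType) := {
  m_st : finType;
  m_act : finType;
  m_root : m_st;
  m_term : pred m_st;
  m_avail : m_st -> pred m_act;
  m_cost : m_st -> m_act -> R;
  m_trans : m_st -> m_act -> {ffun m_st -> R};
  m_val : m_st -> \bar R
}.

Definition isdist (R : realType) (T : finType) (p : {ffun T -> R}) : bool :=
  [forall x, 0 <= p x] && (\sum_(x : T) p x == 1).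

(* well-formedness of an MDP: sinks have no actions, non-sinks have some,
   nonnegative costs, genuine transition distributions, nonnegative
   (possibly infinite) terminal values, and acyclicity (the transition graph
   admits a strictly decreasing rank, i.e. has no directed cycle). *)
Definition wf_MDP (R : realType) (M : MDP R) : Prop :=
  (forall (s : m_st M) a, m_avail s a -> ~~ m_term s) /\
  (forall s : m_st M, ~~ m_term s -> exists a, m_avail s a) /\
  (forall (s : m_st M) a, m_avail s a -> 0 <= m_cost s a) /\
  (forall (s : m_st M) a, m_avail s a -> isdist (m_trans s a)) /\
  (forall s : m_st M, m_term s -> (0 <= m_val s)%E) /\
  (exists rk : m_st M -> nat, forall (s : m_st M) a t,
          m_avail s a -> 0 < m_trans s a t -> (rk t < rk s)%N).

(* moves of a policy with two MDPs (indices ord0 = MDP 1, ord_max = MDP 2) *)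
Inductive move := Adv1 | Adv2 | Halt of {set 'I_2}.

Section Eval.
Variables (R : realType) (M1 M2 : MDP R) (F : {set {set 'I_2}}).

(* a history: for each past advance, the joint state and the action taken *)
Definition hist := seq (m_st M1 * m_st M2 * (m_act M1 + m_act M2)).

(* An adaptive policy: [mv] chooses, from the history and the current joint
   state, whether to advance MDP 1, advance MDP 2, or halt selecting a set;
   [d1]/[d2] give the distribution from which the action is drawn when the
   corresponding MDP is advanced.  Invalid moves (advancing a sink, using an
   unavailable action, halting with an infeasible set) cost +oo.  *)
Variables (mv : hist -> m_st M1 -> m_st M2 -> move)
          (d1 : hist -> m_st M1 -> m_st M2 -> {ffun m_act M1 -> R})
          (d2 : hist -> m_st M1 -> m_st M2 -> {ffun m_act M2 -> R}).

Definition term2 (s1 : m_st M1) (s2 : m_st M2) (i : 'I_2) : bool :=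
  if i == ord0 then m_term s1 else m_term s2.
Definition val2 (s1 : m_st M1) (s2 : m_st M2) (i : 'I_2) : \bar R :=
  if i == ord0 then m_val s1 else m_val s2.

Fixpoint eval (k : nat) (h : hist) (s1 : m_st M1) (s2 : m_st M2) : \bar R :=
  if k is k'.+1 then
    match mv h s1 s2 with
    | Halt X =>
        if (X \in F) && [forall i in X, term2 s1 s2 i]
        then (\sum_(i in X) val2 s1 s2 i)%E else +oo%E
    | Adv1 =>
        let p := d1 h s1 s2 in
        if ~~ m_term s1 && isdist p && [forall a, (0 < p a) ==> m_avail s1 a]
        then (\sum_(a : m_act M1) (p a)%:E *
               ((m_cost s1 a)%:E +
                \sum_(t : m_st M1) (m_trans s1 a t)%:E *
                   eval k' (rcons h (s1, s2, inl a)) t s2))%E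
        else +oo%E
    | Adv2 =>
        let p := d2 h s1 s2 in
        if ~~ m_term s2 && isdist p && [forall a, (0 < p a) ==> m_avail s2 a]
        then (\sum_(a : m_act M2) (p a)%:E *
               ((m_cost s2 a)%:E +
                \sum_(t : m_st M2) (m_trans s2 a t)%:E *
                   eval k' (rcons h (s1, s2, inr a)) s1 t))%E
        else +oo%E
    end
  else +oo%E.

(* disutility from the roots; the fuel suffices since along any run each
   MDP visits each of its states at most once (acyclicity). *)
Definition disutility : \bar R :=
  eval (#|m_st M1| + #|m_st M2| + 1) [::] (m_root M1) (m_root M2).

End Eval.

Definition dirac (T : finType) (R : realType) (a : T) : {ffun T -> R} :=
  [ffun b => if b == a then 1 else 0].

Record policy (R : realType) (M1 M2 : MDP R) := {
  p_move : hist M1 M2 -> m_st M1 -> m_st M2 -> move;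
  p_act1 : hist M1 M2 -> m_st M1 -> m_st M2 -> m_act M1;
  p_act2 : hist M1 M2 -> m_st M1 -> m_st M2 -> m_act M2
}.

Definition policy_disutility (R : realType) (M1 M2 : MDP R)
    (F : {set {set 'I_2}}) (P : policy M1 M2) : \bar R :=
  disutility F (p_move P)
    (fun h s1 s2 => dirac R (p_act1 P h s1 s2))
    (fun h s1 s2 => dirac R (p_act2 P h s1 s2)).

Definition OPT (R : realType) (F : {set {set 'I_2}}) (M1 M2 : MDP R) : \bar R :=
  ereal_inf (range (@policy_disutility R M1 M2 F)).

Definition commitment_ok (R : realType) (M : MDP R)
    (pi : m_st M -> {ffun m_act M -> R}) : Prop :=
  forall s : m_st M, ~~ m_term s ->
    isdist (pi s) /\ (forall a, 0 < pi s a -> m_avail s a).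

Definition ComInf (R : realType) (F : {set {set 'I_2}}) (M1 M2 : MDP R) : \bar R :=
  ereal_inf [set x | exists (mv : hist M1 M2 -> m_st M1 -> m_st M2 -> move)
                       (pi1 : m_st M1 -> {ffun m_act M1 -> R})
                       (pi2 : m_st M2 -> {ffun m_act M2 -> R}),
      [/\ commitment_ok pi1, commitment_ok pi2 &
          x = disutility F mv (fun _ s1 _ => pi1 s1) (fun _ _ s2 => pi2 s2)]].

Definition F_single : {set {set 'I_2}} :=
  ([set [set ord0]; [set ord_max]; [set: 'I_2]])%SET.

(* Box 2 costs e to open and is broken (value +oo) with probability e,
   otherwise worth 1.  Box 1 can be opened safely at cost 1, or riskily at
   cost e, in which case it is broken with probability e; unbroken it is
   worth 0.  Adaptively, open box 2 first and open box 1 safely only if box 2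
   broke: this costs at most 4e, while every policy pays at least the first
   opening cost e.  A committing policy must fix the action at the root of
   box 1 in advance.  If the risky action has positive probability, then with
   positive probability both boxes end up broken, so the disutility is +oo;
   otherwise every run either opens box 1 at cost 1 or selects box 2, worth at
   least 1.  Hence ComGap >= 1/(4e), which is unbounded as e -> 0.  Both bounds
   are proved by comparing the fuelled evaluation with sub- and
   super-solutions of the Bellman recursion. *)

From Pilot Require Import Defs.
From HB Require Import structures.
From mathcomp Require Import all_boot all_order all_algebra.
From mathcomp Require Import boolp classical_sets reals constructive_ereal ereal.
From mathcomp Require Import ring lra.
Set Implicit Arguments. Unset Strict Implicit. Unset Printing Implicit Defensive.
Import Order.TTheory GRing.Theory Num.Theory.
Local Open Scope ring_scope.

Lemma isdist_dirac (R : realType) (T : finType) (a : T) : isdist (dirac R a).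
Proof.
apply/andP; split; first by apply/forallP => x; rewrite ffunE; case: ifP.
rewrite (bigD1 a) //= big1 ?ffunE ?eqxx ?addr0 // => x /negbTE xa.
by rewrite ffunE xa.
Qed.

Lemma isdist_ord1 (R : realType) (p : {ffun 'I_1 -> R}) : isdist p -> p = dirac R ord0.
Proof.
move=> /andP[_ /eqP]; rewrite big_ord1 => p1.
by apply/ffunP => i; rewrite ord1 ffunE eqxx.
Qed.

Section StepValue.
Variables (R : realType) (A T : finType).
Implicit Types (p : {ffun A -> R}) (c : A -> R) (tr : A -> {ffun T -> R}).

Definition step_value p c tr (f : A -> T -> \bar R) : \bar R :=
  (\sum_a (p a)%:E * ((c a)%:E + \sum_t (tr a t)%:E * f a t))%E.

Lemma step_value_dirac c tr (f : A -> T -> \bar R) a :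
  step_value (dirac R a) c tr f = ((c a)%:E + \sum_t (tr a t)%:E * f a t)%E.
Proof.
rewrite /step_value (bigD1 a) //= ffunE eqxx mul1e.
by rewrite [X in (_ + X)%E]big1 ?adde0 // => b /negbTE ba; rewrite ffunE ba mul0e.
Qed.

Lemma le_step_value p c tr (f g : A -> T -> \bar R) :
  (forall a, 0 <= p a) -> (forall a, 0 < p a -> forall t, 0 <= tr a t) ->
  (forall a t, 0 < p a -> 0 < tr a t -> (f a t <= g a t)%E) ->
  (step_value p c tr f <= step_value p c tr g)%E.
Proof.
move=> p_ge0 tr_ge0 le_fg; apply: lee_sum => a _.
move: (p_ge0 a); rewrite le_eqVlt => /predU1P[<-|pa]; first by rewrite !mul0e.
apply: lee_wpmul2l; first by rewrite lee_fin ltW.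
apply: leeD2l; apply: lee_sum => t _.
move: (tr_ge0 a pa t); rewrite le_eqVlt => /predU1P[<-|tra]; first by rewrite !mul0e.
by apply: lee_wpmul2l; [rewrite lee_fin ltW | exact: le_fg].
Qed.

Lemma step_value_ge p c tr (f : A -> T -> \bar R) (c0 : R) :
  isdist p -> (forall a, 0 < p a -> c0 <= c a /\ forall t, 0 <= tr a t) ->
  (forall a t, (0 <= f a t)%E) -> (c0%:E <= step_value p c tr f)%E.
Proof.
move=> /andP[/forallP p_ge0 /eqP p1] supp f_ge0.
have -> : c0%:E = (\sum_a (p a)%:E * c0%:E)%E.
  by rewrite -(eq_bigr _ (fun a _ => EFinM _ _)) sumEFin -mulr_suml p1 mul1r.
apply: lee_sum => a _.
move: (p_ge0 a); rewrite le_eqVlt => /predU1P[<-|pa]; first by rewrite !mul0e.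
have [c0_le tr_ge0] := supp a pa.
apply: lee_wpmul2l; first by rewrite lee_fin ltW.
apply: lee_paddr; last by rewrite lee_fin.
by apply: sume_ge0 => t _; apply: mule_ge0; [rewrite lee_fin|].
Qed.

Lemma step_value_pinfty p c tr (f : A -> T -> \bar R) a t :
  (forall a, 0 <= p a) -> (forall a, 0 < p a -> 0 <= c a /\ forall t, 0 <= tr a t) ->
  (forall a t, (0 <= f a t)%E) ->
  0 < p a -> 0 < tr a t -> f a t = +oo%E -> step_value p c tr f = +oo%E.
Proof.
move=> p_ge0 supp f_ge0 pa tra fat.
have summand_ge0 b : (0 <= (p b)%:E * ((c b)%:E + \sum_t (tr b t)%:E * f b t))%E.
  move: (p_ge0 b); rewrite le_eqVlt => /predU1P[<-|pb]; first by rewrite mul0e.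
  have [c_ge0 tr_ge0] := supp b pb.
  rewrite mule_ge0 ?adde_ge0 ?lee_fin ?(ltW pb) //.
  by apply: sume_ge0 => t' _; rewrite mule_ge0 ?lee_fin.
have inner : (\sum_t (tr a t)%:E * f a t = +oo)%E.
  apply/esum_eqyP => [t' _|].
    by rewrite gt_eqF // (lt_le_trans ltNy0) // mule_ge0 ?lee_fin ?(supp a pa).2.
  by exists t; rewrite mem_index_enum fat gt0_muley ?lte_fin.
apply/esum_eqyP => [b _|]; first by rewrite gt_eqF // (lt_le_trans ltNy0).
by exists a; rewrite mem_index_enum inner addey // gt0_muley ?lte_fin.
Qed.

End StepValue.

Section Draws.
Variables (R : realType) (M : MDP R).
Hypothesis wfM : wf_MDP M.

Definition valid_draw (s : m_st M) (p : {ffun m_act M -> R}) : bool :=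
  ~~ m_term s && isdist p && [forall a, (0 < p a) ==> m_avail s a].

Lemma valid_draw_dirac (s : m_st M) a :
  ~~ m_term s -> m_avail s a -> valid_draw s (dirac R a).
Proof.
move=> nterm avail; rewrite /valid_draw nterm isdist_dirac /=.
apply/forallP => b; rewrite ffunE.
by case: eqP => [-> | _]; rewrite ?avail ?implybT ?ltxx.
Qed.

Lemma valid_draw_ge0 (s : m_st M) (p : {ffun m_act M -> R}) :
  valid_draw s p ->
  (forall a, 0 <= p a) /\ (forall a, 0 < p a -> forall t, 0 <= m_trans s a t).
Proof.
have [_ [_ [_ [dist_tr _]]]] := wfM.
move=> /andP[/andP[_ /andP[/forallP p_ge0 _]] /forallP supp].
split=> // a pa t; have /andP[/forallP + _] := dist_tr s a (implyP (supp a) pa).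
exact.
Qed.

Lemma valid_draw_step_value_ge (s : m_st M) (p : {ffun m_act M -> R})
    (f : m_act M -> m_st M -> \bar R) (c0 : R) :
  valid_draw s p -> (forall a, m_avail s a -> c0 <= m_cost s a) ->
  (forall a t, (0 <= f a t)%E) -> (c0%:E <= step_value p (m_cost s) (m_trans s) f)%E.
Proof.
move=> ok le_cost f_ge0; have [_ tr_ge0] := valid_draw_ge0 ok.
move: ok => /andP[/andP[_ dist_p] /forallP supp].
apply: step_value_ge => // a pa; split; last exact: tr_ge0.
exact/le_cost/(implyP (supp a)).
Qed.

Lemma valid_draw_step_value_ge0 (s : m_st M) (p : {ffun m_act M -> R})
    (f : m_act M -> m_st M -> \bar R) :
  valid_draw s p -> (forall a t, (0 <= f a t)%E) ->
  (0 <= step_value p (m_cost s) (m_trans s) f)%E.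
Proof.
have [_ [_ [cost_ge0 _]]] := wfM.
by move=> ok f_ge0; apply: (valid_draw_step_value_ge (c0 := 0)) => //; exact: cost_ge0.
Qed.

Lemma valid_draw_step_value_pinfty (s : m_st M) (p : {ffun m_act M -> R})
    (f : m_act M -> m_st M -> \bar R) a t :
  valid_draw s p -> (forall a t, (0 <= f a t)%E) ->
  0 < p a -> 0 < m_trans s a t -> f a t = +oo%E ->
  step_value p (m_cost s) (m_trans s) f = +oo%E.
Proof.
move=> ok f_ge0; have [p_ge0 tr_ge0] := valid_draw_ge0 ok.
have [_ [_ [cost_ge0 _]]] := wfM; move: ok => /andP[_ /forallP supp].
apply: step_value_pinfty => // b pb; split; last exact: tr_ge0.
exact/cost_ge0/(implyP (supp b)).
Qed.

End Draws.

Section Bellman.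
Variables (R : realType) (M1 M2 : MDP R) (F : {set {set 'I_2}}).

Definition halt_value (s1 : m_st M1) (s2 : m_st M2) (X : {set 'I_2}) : \bar R :=
  if (X \in F) && [forall i in X, term2 s1 s2 i]
  then (\sum_(i in X) val2 s1 s2 i)%E else +oo%E.

Variables (mv : hist M1 M2 -> m_st M1 -> m_st M2 -> move)
          (d1 : hist M1 M2 -> m_st M1 -> m_st M2 -> {ffun m_act M1 -> R})
          (d2 : hist M1 M2 -> m_st M1 -> m_st M2 -> {ffun m_act M2 -> R}).
Local Notation eval := (Defs.eval F mv d1 d2).

Lemma eval_Adv1 k h s1 s2 : mv h s1 s2 = Adv1 ->
  eval k.+1 h s1 s2 =
  if valid_draw s1 (d1 h s1 s2)
  then step_value (d1 h s1 s2) (m_cost s1) (m_trans s1)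
         (fun a t => eval k (rcons h (s1, s2, inl a)) t s2)
  else +oo%E.
Proof. by move=> /= ->. Qed.

Lemma eval_Adv2 k h s1 s2 : mv h s1 s2 = Adv2 ->
  eval k.+1 h s1 s2 =
  if valid_draw s2 (d2 h s1 s2)
  then step_value (d2 h s1 s2) (m_cost s2) (m_trans s2)
         (fun a t => eval k (rcons h (s1, s2, inr a)) s1 t)
  else +oo%E.
Proof. by move=> /= ->. Qed.

Lemma eval_Halt k h s1 s2 X : mv h s1 s2 = Halt X ->
  eval k.+1 h s1 s2 = halt_value s1 s2 X.
Proof. by move=> /= ->. Qed.

Section LowerBound.
Hypotheses (wf1 : wf_MDP M1) (wf2 : wf_MDP M2).
Variable V : m_st M1 -> m_st M2 -> \bar R.
Hypothesis V_halt : forall s1 s2 X, (V s1 s2 <= halt_value s1 s2 X)%E.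
Hypothesis V_adv1 : forall h s1 s2, valid_draw s1 (d1 h s1 s2) ->
  (V s1 s2 <= step_value (d1 h s1 s2) (m_cost s1) (m_trans s1) (fun _ t => V t s2))%E.
Hypothesis V_adv2 : forall h s1 s2, valid_draw s2 (d2 h s1 s2) ->
  (V s1 s2 <= step_value (d2 h s1 s2) (m_cost s2) (m_trans s2) (fun _ t => V s1 t))%E.

Lemma le_eval k h s1 s2 : (V s1 s2 <= eval k h s1 s2)%E.
Proof.
elim: k h s1 s2 => [|k IH] h s1 s2; first exact: leey.
case E: (mv h s1 s2) => [||X].
- rewrite (eval_Adv1 k E); case: ifP => [ok|_]; last exact: leey.
  apply: le_trans (V_adv1 ok) _; have [p_ge0 tr_ge0] := valid_draw_ge0 wf1 ok.
  by apply: le_step_value => // a t _ _; exact: IH.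
- rewrite (eval_Adv2 k E); case: ifP => [ok|_]; last exact: leey.
  apply: le_trans (V_adv2 ok) _; have [p_ge0 tr_ge0] := valid_draw_ge0 wf2 ok.
  by apply: le_step_value => // a t _ _; exact: IH.
- by rewrite (eval_Halt k E).
Qed.

Lemma le_disutility : (V (m_root M1) (m_root M2) <= disutility F mv d1 d2)%E.
Proof. exact: le_eval. Qed.

End LowerBound.

Section UpperBound.
Hypotheses (wf1 : wf_MDP M1) (wf2 : wf_MDP M2).
Variables (W : m_st M1 -> m_st M2 -> \bar R) (rk : m_st M1 -> m_st M2 -> nat).
(* [rk] bounds the fuel the evaluation needs. *)
Hypothesis W_move : forall h s1 s2, (W s1 s2 < +oo)%E ->
  match mv h s1 s2 with
  | Adv1 =>
      [/\ valid_draw s1 (d1 h s1 s2),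
          forall a t, 0 < d1 h s1 s2 a -> 0 < m_trans s1 a t ->
            (rk t s2 < rk s1 s2)%N &
          (step_value (d1 h s1 s2) (m_cost s1) (m_trans s1) (fun _ t => W t s2)
             <= W s1 s2)%E]
  | Adv2 =>
      [/\ valid_draw s2 (d2 h s1 s2),
          forall a t, 0 < d2 h s1 s2 a -> 0 < m_trans s2 a t ->
            (rk s1 t < rk s1 s2)%N &
          (step_value (d2 h s1 s2) (m_cost s2) (m_trans s2) (fun _ t => W s1 t)
             <= W s1 s2)%E]
  | Halt X => (halt_value s1 s2 X <= W s1 s2)%E
  end.

Lemma eval_le k h s1 s2 : (rk s1 s2 < k)%N -> (eval k h s1 s2 <= W s1 s2)%E.
Proof.
elim: k h s1 s2 => [//|k IH] h s1 s2 rk_lt.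
have [W_fin|] := ltP (W s1 s2) +oo%E; last by rewrite leye_eq => /eqP ->; exact: leey.
move: (W_move h W_fin); case E: (mv h s1 s2) => [||X].
- move=> [ok rk_dec le_W]; rewrite (eval_Adv1 k E) ok; apply: le_trans le_W.
  have [p_ge0 tr_ge0] := valid_draw_ge0 wf1 ok.
  apply: le_step_value => // a t pa tra; apply: IH.
  exact: leq_trans (rk_dec a t pa tra) rk_lt.
- move=> [ok rk_dec le_W]; rewrite (eval_Adv2 k E) ok; apply: le_trans le_W.
  have [p_ge0 tr_ge0] := valid_draw_ge0 wf2 ok.
  apply: le_step_value => // a t pa tra; apply: IH.
  exact: leq_trans (rk_dec a t pa tra) rk_lt.
- by rewrite (eval_Halt k E).
Qed.

End UpperBound.

End Bellman.

Lemma root_cost_le_OPT (R : realType) (M1 M2 : MDP R) (F : {set {set 'I_2}}) (c : R) :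
  wf_MDP M1 -> wf_MDP M2 -> finset.set0 \notin F -> ~~ m_term (m_root M1) -> ~~ m_term (m_root M2) -> 0 <= c ->
  (forall a, m_avail (m_root M1) a -> c <= m_cost (m_root M1) a) ->
  (forall a, m_avail (m_root M2) a -> c <= m_cost (m_root M2) a) ->
  (c%:E <= OPT F M1 M2)%E.
Proof.
move=> wf1 wf2 F_set0 nterm1 nterm2 c_ge0 le_cost1 le_cost2.
apply/ereal_infP => _ [P _ <-].
pose at_roots s1 s2 := (s1 == m_root M1) && (s2 == m_root M2).
pose V s1 s2 := (if at_roots s1 s2 then c else 0)%:E.
have V_ge0 s1 s2 : (0 <= V s1 s2)%E by rewrite lee_fin; case: ifP.
have [_ [_ [cost1_ge0 [_ [val1_ge0 _]]]]] := wf1.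
have [_ [_ [cost2_ge0 [_ [val2_ge0 _]]]]] := wf2.
apply: (le_trans _ (le_disutility _ wf1 wf2 (V := V) _ _ _)).
  by rewrite /V /at_roots !eqxx.
- move=> s1 s2 X; rewrite /halt_value.
  case: ifP => [/andP[XF /forall_inP term_X]|_]; last exact: leey.
  rewrite /V; case: ifP => [/andP[/eqP r1 /eqP r2]|_].
    have [i Xi] : exists i, i \in X.
      by apply/set0Pn; apply: contraNneq F_set0 => <-.
    move: (term_X i Xi); rewrite /term2 r1 r2.
    by rewrite (negbTE nterm1) (negbTE nterm2); case: ifP.
  apply: sume_ge0 => i Xi; move: (term_X i Xi); rewrite /term2 /val2.
  by case: ifP => _; [exact: val1_ge0 | exact: val2_ge0].
- move=> h s1 s2 ok; apply: valid_draw_step_value_ge => //.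
  rewrite /at_roots; case: ifP => [/andP[/eqP -> _]|_]; first exact: le_cost1.
  exact: cost1_ge0.
- move=> h s1 s2 ok; apply: valid_draw_step_value_ge => //.
  rewrite /at_roots; case: ifP => [/andP[_ /eqP ->]|_]; first exact: le_cost2.
  exact: cost2_ge0.
Qed.

Lemma set0_notin_F_single : finset.set0 \notin F_single.
Proof.
rewrite /F_single !finset.in_setU !finset.in_set1 !(eq_sym finset.set0).
by rewrite -!finset.cards_eq0 finset.cardsT !finset.cards1 card_ord.
Qed.

Lemma halt_value_single_ge (R : realType) (M1 M2 : MDP R) (s1 : m_st M1) (s2 : m_st M2)
    X (x : \bar R) :
  wf_MDP M1 -> (m_term s1 -> (x <= m_val s1)%E) -> (m_term s2 -> (x <= m_val s2)%E) ->
  (x <= halt_value F_single s1 s2 X)%E.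
Proof.
move=> [_ [_ [_ [_ [v1_ge0 _]]]]] le_v1 le_v2; rewrite /halt_value.
case: ifP => [/andP[XF /forall_inP term_X]|_]; last exact: leey.
move: XF term_X; rewrite !finset.in_setU !finset.in_set1.
move=> /orP[/orP[]|] /eqP -> term_X.
- by rewrite big_set1; apply/le_v1/(term_X ord0); rewrite finset.in_set1.
- by rewrite big_set1; apply/le_v2/(term_X ord_max); rewrite finset.in_set1.
- have term1 : m_term s1 by apply: (term_X ord0); rewrite finset.in_setT.
  have term2 : m_term s2 by apply: (term_X ord_max); rewrite finset.in_setT.
  rewrite (eq_bigl xpredT) => [|i]; last by rewrite finset.in_setT.
  rewrite big_ord_recl big_ord1 /=.
  by apply: lee_paddl; [exact: v1_ge0 | exact: le_v2].
Qed.

Lemma halt_value_single1 (R : realType) (M1 M2 : MDP R) (s1 : m_st M1) (s2 : m_st M2) :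
  m_term s1 -> halt_value F_single s1 s2 [set ord0]%SET = m_val s1.
Proof.
move=> term1; rewrite /halt_value big_set1 /F_single.
rewrite !finset.in_setU !finset.in_set1 eqxx /= ifT //.
by apply/forall_inP => i; rewrite finset.in_set1 => /eqP ->.
Qed.

Lemma halt_value_single2 (R : realType) (M1 M2 : MDP R) (s1 : m_st M1) (s2 : m_st M2) :
  m_term s2 -> halt_value F_single s1 s2 [set ord_max]%SET = m_val s2.
Proof.
move=> term2; rewrite /halt_value big_set1 /F_single.
rewrite !finset.in_setU !finset.in_set1 eqxx orbT /= ifT //.
by apply/forall_inP => i; rewrite finset.in_set1 => /eqP ->.
Qed.

(* The states of a box: the closed root [ord0] and two sinks.  The sinks are
   spelled exactly as [big_ord_recl] produces them, so that sums over ['I_3]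
   expand to them syntactically. *)
Definition success : 'I_3 := lift ord0 (ord0 : 'I_2).
Definition failure : 'I_3 := lift ord0 (lift ord0 (ord0 : 'I_1)).

Lemma sum_ord3 (R : realType) (f : 'I_3 -> \bar R) :
  (\sum_t f t = f ord0 + f success + f failure)%E.
Proof. by rewrite !big_ord_recl big_ord0 adde0 addeA. Qed.

Section Box.
Variables (R : realType) (A : finType).

(* The root is not terminal, so the value [v] it is given is never used. *)
Definition box_MDP (c : A -> R) (tr : A -> {ffun 'I_3 -> R}) (v : \bar R) : MDP R := {|
  m_st := 'I_3; m_act := A; m_root := ord0;
  m_term := fun s => s != ord0;
  m_avail := fun s _ => s == ord0;
  m_cost := fun _ => c;
  m_trans := fun _ => tr;
  m_val := fun s => if s == failure then +oo%E else v |}.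

Lemma box_MDP_wf (c : A -> R) (tr : A -> {ffun 'I_3 -> R}) (v : \bar R) (a0 : A) :
  (forall a, 0 <= c a) -> (forall a, isdist (tr a)) -> (forall a, tr a ord0 = 0) ->
  (0 <= v)%E -> wf_MDP (box_MDP c tr v).
Proof.
move=> c_ge0 tr_dist tr_root v_ge0; rewrite /wf_MDP /=.
split; [|split; [|split; [|split; [|split]]]].
- by move=> s a /eqP ->.
- by move=> s; rewrite negbK => root_s; exists a0.
- by move=> s a _; exact: c_ge0.
- by move=> s a _; exact: tr_dist.
- by move=> s _; case: ifP.
- exists (fun s : 'I_3 => nat_of_bool (s == ord0)) => s a t /eqP -> /=.
  by case: eqP => [-> | //]; rewrite tr_root ltxx.
Qed.

End Box.

Lemma box_nonterminal (s : 'I_3) : ~~ (s != ord0) -> s = ord0.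
Proof. by move/negPn/eqP. Qed.

Section Instance.
Variables (R : realType) (e : R).
Hypotheses (e_gt0 : 0 < e) (e_le1 : e <= 1).

Definition risky_trans : {ffun 'I_3 -> R} :=
  [ffun t => if t == success then 1 - e else if t == failure then e else 0].
Definition safe_trans : {ffun 'I_3 -> R} := [ffun t => (t == success)%:R].

Definition safe_or_risky_MDP : MDP R :=
  box_MDP (fun risky : bool => if risky then e else 1)
    (fun risky => if risky then risky_trans else safe_trans) 0%E.
Definition risky_MDP : MDP R := box_MDP (fun _ : 'I_1 => e) (fun _ => risky_trans) 1%E.

Lemma sum_risky_trans (g : 'I_3 -> \bar R) :
  (\sum_t (risky_trans t)%:E * g t = (1 - e)%:E * g success + e%:E * g failure)%E.
Proof. by rewrite sum_ord3 !ffunE /= mul0e add0e. Qed.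

Lemma sum_safe_trans (g : 'I_3 -> \bar R) :
  (\sum_t (safe_trans t)%:E * g t = g success)%E.
Proof. by rewrite sum_ord3 !ffunE /= !mul0e add0e adde0 mul1e. Qed.

Lemma isdist_risky_trans : isdist risky_trans.
Proof.
apply/andP; split.
  apply/forallP => t; rewrite ffunE.
  by case: ifP => _; [rewrite subr_ge0 | case: ifP => _; rewrite // ltW].
by rewrite !big_ord_recl big_ord0 !ffunE /=; apply/eqP; ring.
Qed.

Lemma isdist_safe_trans : isdist safe_trans.
Proof.
apply/andP; split; first by apply/forallP => t; rewrite ffunE ler0n.
by rewrite !big_ord_recl big_ord0 !ffunE /=; apply/eqP; ring.
Qed.

Lemma safe_or_risky_MDP_wf : wf_MDP safe_or_risky_MDP.
Proof.
apply: box_MDP_wf true _ _ _ _ => //.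
- by case; rewrite ?ler01 ?ltW.
- by case; [exact: isdist_risky_trans | exact: isdist_safe_trans].
- by case; rewrite ffunE.
Qed.

Lemma risky_MDP_wf : wf_MDP risky_MDP.
Proof.
apply: box_MDP_wf ord0 _ _ _ _ => //.
- by move=> _; rewrite ltW.
- by move=> _; exact: isdist_risky_trans.
- by move=> _; rewrite ffunE.
Qed.

Lemma e_le_OPT : (e%:E <= OPT F_single safe_or_risky_MDP risky_MDP)%E.
Proof.
apply: (root_cost_le_OPT safe_or_risky_MDP_wf risky_MDP_wf) => //.
- exact: set0_notin_F_single.
- exact: ltW.
- by case.
Qed.

Lemma risky_commitment_disutility_pinfty
    (mv : hist safe_or_risky_MDP risky_MDP -> 'I_3 -> 'I_3 -> move)
    (pi1 : 'I_3 -> {ffun bool -> R}) (pi2 : 'I_3 -> {ffun 'I_1 -> R}) :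
  0 < pi1 ord0 true ->
  disutility F_single mv (fun _ s1 _ => pi1 s1) (fun _ _ s2 => pi2 s2) = +oo%E.
Proof.
move=> risky; apply/eqP; rewrite eq_le leey /=.
(* Until one box has succeeded, every move risks that both boxes fail. *)
pose V (s1 s2 : 'I_3) : \bar R :=
  if (s1 == success) || (s2 == success) then 0%E else +oo%E.
have V_ge0 s1 s2 : (0 <= V s1 s2)%E by rewrite /V; case: ifP.
apply: (le_trans _ (le_disutility _ safe_or_risky_MDP_wf risky_MDP_wf (V := V) _ _ _)).
  by [].
- move=> s1 s2 X; apply: (halt_value_single_ge X safe_or_risky_MDP_wf).
  + by case: s1 => [[|[|[|?]]] ?] //= _; rewrite leey.
  + by case: s2 => [[|[|[|?]]] ?] //= _; rewrite ?leey // /V orbT lee01.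
- move=> h s1 s2 ok.
  have /andP[/andP[/box_nonterminal s1_root _] _] := ok; subst s1.
  have [->|s2_nsucc] := eqVneq s2 success.
    rewrite {1}/V orbT /=.
    by apply: (valid_draw_step_value_ge0 safe_or_risky_MDP_wf ok) => a t; exact: V_ge0.
  rewrite (valid_draw_step_value_pinfty safe_or_risky_MDP_wf (a := true) (t := failure) ok)
    ?leey //=.
  + by rewrite ffunE.
  + by rewrite /V (negbTE s2_nsucc).
- move=> h s1 s2 ok.
  have /andP[/andP[/box_nonterminal s2_root /isdist_ord1 pi2_dirac] _] := ok; subst s2.
  have [->|s1_nsucc] := eqVneq s1 success.
    rewrite {1}/V eqxx /=.
    by apply: (valid_draw_step_value_ge0 risky_MDP_wf ok) => a t; exact: V_ge0.
  rewrite (valid_draw_step_value_pinfty risky_MDP_wf (a := ord0) (t := failure) ok)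
    ?leey //=.
  + by rewrite pi2_dirac ffunE eqxx ltr01.
  + by rewrite ffunE.
  + by rewrite /V (negbTE s1_nsucc).
Qed.

Lemma safe_commitment_disutility_ge1
    (mv : hist safe_or_risky_MDP risky_MDP -> 'I_3 -> 'I_3 -> move)
    (pi1 : 'I_3 -> {ffun bool -> R}) (pi2 : 'I_3 -> {ffun 'I_1 -> R}) :
  pi1 ord0 true = 0 ->
  (1 <= disutility F_single mv (fun _ s1 _ => pi1 s1) (fun _ _ s2 => pi2 s2))%E.
Proof.
move=> safe.
pose V (s1 s2 : 'I_3) : \bar R := if s1 == success then 0%E else 1%E.
have V_ge0 s1 s2 : (0 <= V s1 s2)%E by rewrite /V; case: ifP.
apply: (le_trans _ (le_disutility _ safe_or_risky_MDP_wf risky_MDP_wf (V := V) _ _ _)).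
  by [].
- move=> s1 s2 X; apply: (halt_value_single_ge X safe_or_risky_MDP_wf).
  + by case: s1 => [[|[|[|?]]] ?] //= _; rewrite leey.
  + by case: s2 => [[|[|[|?]]] ?] //= _; rewrite ?leey // /V; case: ifP.
- move=> h s1 s2 ok.
  have /andP[/andP[/box_nonterminal s1_root /andP[_ /eqP]]] := ok.
  rewrite big_bool /= s1_root safe add0r => safe_sure _; subst s1.
  rewrite /step_value big_bool /= safe safe_sure mul0e add0e mul1e.
  by rewrite sum_safe_trans adde0.
- move=> h s1 s2 ok.
  have /andP[/andP[/box_nonterminal s2_root /isdist_ord1 pi2_dirac] _] := ok; subst s2.
  have [->|s1_nsucc] := eqVneq s1 success.
    rewrite {1}/V eqxx /=.
    by apply: (valid_draw_step_value_ge0 risky_MDP_wf ok) => a t; exact: V_ge0.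
  rewrite pi2_dirac step_value_dirac /= sum_risky_trans /V (negbTE s1_nsucc) !mule1.
  by rewrite -!EFinD lee_fin subrK; apply: ler_wpDl (ltW e_gt0) _.
Qed.

Lemma one_le_ComInf : (1 <= ComInf F_single safe_or_risky_MDP risky_MDP)%E.
Proof.
apply/ereal_infP => _ [mv [pi1 [pi2 [pi1_ok _ ->]]]].
have [/andP[/forallP pi1_ge0 _] _] := pi1_ok ord0 isT.
move: (pi1_ge0 true); rewrite le_eqVlt => /predU1P[safe|risky].
- exact: safe_commitment_disutility_ge1.
- by rewrite risky_commitment_disutility_pinfty ?leey.
Qed.

Definition opt_policy : policy safe_or_risky_MDP risky_MDP :=
  @Build_policy R safe_or_risky_MDP risky_MDP
    (fun _ (s1 s2 : 'I_3) =>
       if s2 == ord0 then Adv2 else if s1 == ord0 then Adv1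
       else if s1 == success then Halt [set ord0]%SET else Halt [set ord_max]%SET)
    (fun _ _ (s2 : 'I_3) => s2 != failure)
    (fun _ _ _ => ord0).

(* An upper bound on the expected remaining disutility of [opt_policy];
   +oo at the states it never reaches. *)
Definition opt_value (s1 s2 : 'I_3) : \bar R :=
  match nat_of_ord s1, nat_of_ord s2 with
  | 0, 0 => (4 * e)%:E
  | 0, 1 => (e + e)%:E
  | 0, 2 => 1%E
  | 1, 1 | 1, 2 => 0%E
  | 2, 1 => 1%E
  | _, _ => +oo%E
  end%N.

Definition opt_rank (s1 s2 : 'I_3) : nat := (s1 == ord0) + (s2 == ord0).

Lemma OPT_le_4e : (OPT F_single safe_or_risky_MDP risky_MDP <= (4 * e)%:E)%E.
Proof.
apply: (le_trans (ereal_inf_lbound _)); first by exists opt_policy.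
rewrite -[(4 * e)%:E]/(opt_value ord0 ord0).
apply: (@eval_le _ _ _ _ _ _ _ safe_or_risky_MDP_wf risky_MDP_wf opt_value opt_rank);
  last by rewrite !card_ord.
move=> h [[|[|[|?]]] ?] [[|[|[|?]]] ?] //= _.
- split; first exact: valid_draw_dirac.
    by move=> a [[|[|[|?]]] ?] _; rewrite /= ?ffunE ?ltxx.
  rewrite step_value_dirac sum_risky_trans /opt_value /= mule1 -EFinM -!EFinD lee_fin.
  by nra.
- split; first exact: valid_draw_dirac.
    by move=> [] [[|[|[|?]]] ?] _; rewrite /= ?ffunE ?ltxx.
  by rewrite step_value_dirac sum_risky_trans /opt_value /= mule0 mule1 add0e.
- split; first exact: valid_draw_dirac.
    by move=> [] [[|[|[|?]]] ?] _; rewrite /= ?ffunE ?ltxx.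
  by rewrite step_value_dirac sum_safe_trans /opt_value /= adde0.
- by rewrite halt_value_single1.
- by rewrite halt_value_single1.
- by rewrite halt_value_single2.
Qed.

End Instance.

Theorem theorem6 (R : realType) (M : R) : 0 < M ->
  exists M1 M2 : MDP R,
    [/\ wf_MDP M1, wf_MDP M2,
        (0 < OPT F_single M1 M2)%E, (OPT F_single M1 M2 < +oo)%E &
        (M%:E * OPT F_single M1 M2 <= ComInf F_single M1 M2)%E].
Proof.
move=> M_gt0; pose e : R := (4 * (M + 1))^-1.
have e_gt0 : 0 < e by rewrite invr_gt0; nra.
have e_le1 : e <= 1 by rewrite invf_le1; nra.
have Me_le1 : M * (4 * e) <= 1 by rewrite mulrA ler_pdivrMr; nra.
exists (safe_or_risky_MDP e), (risky_MDP e); split.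
- exact: safe_or_risky_MDP_wf.
- exact: risky_MDP_wf.
- by apply: lt_le_trans (e_le_OPT e_gt0 e_le1); rewrite lte_fin.
- exact: le_lt_trans (OPT_le_4e e_gt0 e_le1) (ltry _).
- apply: le_trans (one_le_ComInf e_gt0 e_le1).
  apply: le_trans (_ : (M * (4 * e))%:E <= 1)%E; last by rewrite lee_fin.
  by rewrite EFinM lee_wpmul2l ?lee_fin ?(ltW M_gt0) ?OPT_le_4e.
Qed.
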